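(* Let $K$ be a stochastic kernel on a compact space $\Sigma$ with Borel $\sigma$-algebra $\mathscr{F}$, let $\Sigma_0\subset\Sigma_1\subset\Sigma_2$ be sets in $\mathscr{F}$ and $r>0$. Assume: (A1) $\mathscr{P}_{n_0}(x,\Sigma_0)\ge b_0>0$ for all $x\in\Sigma_0$; (A2) $\mathscr{P}_{n_1}(x,\Sigma_1)\ge1-r/4$ for all $x\in\Sigma_1\setminus\Sigma_0$; (A3) $\mathscr{P}_{n_2}(x,\Sigma_2)\ge1-r/4$ for all $x\in\Sigma_2\setminus\Sigma_1$; (A4) $\mathscr{P}^*_n(x,\Sigma_1^{\complement})\ge1-r/4$ for all $x\in\Sigma_2^{\complement}$ and all $n\ge0$. If $(1-b_0)^q<r/4$ for some $q\in\mathbb{N}$, then with $N:=qn_0+n_1+n_2$, for all $x\in\Sigma$, $$\mathbb{P}_x[\exists\, j\ge N:\ \xi^x_j\in\Sigma_1]<r.$$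
   Context: For $x\in\Sigma$ let $\mathbb{P}_x$ be the probability on $\Sigma^{\mathbb{N}}$ under which the coordinate process $\{\xi^x_n\}_{n\ge0}$ is a Markov chain with kernel $K$ and $\xi^x_0=x$. For $x\in E\in\mathscr{F}$: $\mathscr{P}_n(x,E)=\mathbb{P}_x[\xi^x_j\notin E\text{ for some }0\le j\le n]$ and $\mathscr{P}^*_n(x,E)=\mathbb{P}_x[\xi^x_j\in E\text{ for all }0\le j\le n]$. Here $n_0,n_1,n_2\in\mathbb{N}$. *)

From HB Require Import structures.
From mathcomp Require Import all_boot all_order all_algebra.
From mathcomp Require Import all_classical all_reals all_analysis.
Set Implicit Arguments. Unset Strict Implicit. Unset Printing Implicit Defensive.
Import Order.TTheory GRing.Theory Num.Theory.
Local Open Scope classical_set_scope.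
Local Open Scope ring_scope.

Definition borel_space (T : ptopologicalType) := g_sigma_algebraType (@open T).

Section markov.
Context {d : measure_display} {S : measurableType d} {R : realType}.
Local Open Scope ereal_scope.

(* fdd k A n y = P_y[xi_0 in A 0, ..., xi_n in A n] for a Markov chain with
   kernel k started at y, computed by the usual iterated-kernel formula. *)
Fixpoint fdd (k : R.-pker S ~> S) (n : nat) (A : nat -> set S) (y : S) : \bar R :=
  match n with
  | 0 => (\1_(A 0%N) y)%:E
  | n'.+1 => (\1_(A 0%N) y)%:E *
             \int[k y]_z fdd k n' (fun j => A j.+1) z
  end.

Definition is_markov_chain_from {d'} {Omega : measurableType d'}
  (k : R.-pker S ~> S) (x : S) (P : probability Omega R)
  (xi : nat -> Omega -> S) : Prop :=
  (forall n, measurable_fun [set: Omega] (xi n)) /\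
  (forall (n : nat) (A : nat -> set S), (forall j, measurable (A j)) ->
     P [set w | forall j, (j <= n)%N -> A j (xi j w)] = fdd k n A x).

(* curly P_n(x,E) = P_x[xi_j not in E for some 0 <= j <= n] *)
Definition exitP {d'} {Omega : measurableType d'} (P : S -> probability Omega R)
  (xi : nat -> Omega -> S) (n : nat) (x : S) (E : set S) : \bar R :=
  P x [set w | exists j, (j <= n)%N /\ ~ E (xi j w)].

(* curly P^*_n(x,E) = P_x[xi_j in E for all 0 <= j <= n] *)
Definition stayP {d'} {Omega : measurableType d'} (P : S -> probability Omega R)
  (xi : nat -> Omega -> S) (n : nat) (x : S) (E : set S) : \bar R :=
  P x [set w | forall j, (j <= n)%N -> E (xi j w)].

End markov.

(* Write a_b(z) for the probability that the chain started at z avoids S1 at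
   all times j with N <= j <= b; the event in question is the increasing union
   over b of the complements, so it suffices to show a_b(z) > 1 - r.  Work
   backwards: started outside S2 the chain avoids S1 forever with probability
   at least 1 - r/4 by (A4).  Started outside S1 (resp. S0), it either stays in
   S2 for n2 steps (resp. in S1 for n1 steps), which by (A3) (resp. (A2)) has
   probability at most r/4, or it leaves, and the Markov property at the exit
   time hands over to the previous stage; each stage costs r/4.  From an
   arbitrary start, iterating (A1) with the Markov property bounds the
   probability of staying in S0 for q n0 steps by (1 - b0)^q < r/4. *)
From HB Require Import structures.
From mathcomp Require Import all_boot all_order all_algebra.
From mathcomp Require Import all_classical all_reals all_analysis measurable_realfun.
From mathcomp Require Import lra.
Import Order.TTheory GRing.Theory Num.Theory.
Local Open Scope classical_set_scope.
Local Open Scope ring_scope.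

Section fdd_theory.
Context {d : measure_display} {S : measurableType d} {R : realType}.
Variable k : R.-pker S ~> S.
Local Open Scope ereal_scope.

Implicit Types (A B : nat -> set S) (C D E : set S) (y : S).

Lemma fdd_ge0 n A y : 0 <= fdd k n A y.
Proof.
elim: n A y => [|n IH] A y /=; first by rewrite lee_fin indicE.
by apply: mule_ge0; [rewrite lee_fin indicE | exact: integral_ge0].
Qed.

Lemma measurable_fun_fdd n A : (forall j, measurable (A j)) ->
  measurable_fun [set: S] (fdd k n A).
Proof.
elim: n A => [|n IH] A mA /=; first exact/measurable_EFinP/measurable_indic.
apply: emeasurable_funM; first exact/measurable_EFinP/measurable_indic.
apply: (measurable_fun_integral_kernel (measurable_kernel k)); last exact: IH.
exact: fdd_ge0.
Qed.

Lemma fdd_eq0 n A y : ~ A 0%N y -> fdd k n A y = 0.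
Proof. by case: n => [|n] Ay /=; rewrite indicE memNset ?mul0e. Qed.

Lemma fdd_le1 n A y : (forall j, measurable (A j)) -> fdd k n A y <= 1.
Proof.
elim: n A y => [|n IH] A y mA /=; first by rewrite lee_fin indicE lern1 leq_b1.
have [Ay|Ay] := pselect (A 0%N y); last by rewrite indicE memNset // mul0e.
rewrite indicE mem_set // mul1e.
apply: (@le_trans _ _ (\int[k y]_z cst 1 z)); last first.
  by rewrite integral_cst // mul1e prob_kernel.
apply: ge0_le_integral => //; first by move=> z _; exact: fdd_ge0.
  exact: measurable_fun_fdd.
by move=> z _; exact: IH.
Qed.

Lemma fdd_fin_num n A y : (forall j, measurable (A j)) -> fdd k n A y \is a fin_num.
Proof.
move=> mA; rewrite ge0_fin_numE ?fdd_ge0 //.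
exact: le_lt_trans (fdd_le1 n A y mA) (ltry _).
Qed.

Lemma le_fdd n A B y : (forall j, measurable (A j)) -> (forall j, measurable (B j)) ->
  (forall j, A j `<=` B j) -> fdd k n A y <= fdd k n B y.
Proof.
elim: n A B y => [|n IH] A B y mA mB AB /=.
  by rewrite lee_fin !indicE; case: (boolP (y \in A 0%N)) => // /set_mem/AB/mem_set ->.
have [Ay|Ay] := pselect (A 0%N y); last first.
  by rewrite indicE memNset // mul0e; apply: (fdd_ge0 n.+1 B).
rewrite !indicE !mem_set //; last exact: AB.
rewrite !mul1e; apply: ge0_le_integral => //.
- by move=> z _; exact: fdd_ge0.
- exact: measurable_fun_fdd.
- exact: measurable_fun_fdd.
- by move=> z _; apply: IH.
Qed.

Lemma fdd_cst_addn_le E t L (c : R) : measurable E ->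
  (forall z, fdd k L (fun=> E) z <= c%:E) ->
  forall y, fdd k (t + L) (fun=> E) y <= c%:E * fdd k t (fun=> E) y.
Proof.
move=> mE hL y; have c0 : 0 <= c%:E := le_trans (fdd_ge0 _ _ y) (hL y).
elim: t y => [|t IH] y.
  have [Ey|Ey] := pselect (E y); last by rewrite !fdd_eq0 // mule0.
  by rewrite /= indicE mem_set // mule1.
have [Ey|Ey] := pselect (E y); last by rewrite !fdd_eq0 // mule0.
rewrite addSn /= indicE mem_set // !mul1e -ge0_integralZl //; last 2 first.
- exact: measurable_fun_fdd.
- by move=> z _; exact: fdd_ge0.
apply: ge0_le_integral => //.
- by move=> z _; exact: fdd_ge0.
- exact: measurable_fun_fdd.
- exact/measurable_funeM/measurable_fun_fdd.
Qed.

Lemma fdd_cst_muln_le E L q (c : R) : measurable E ->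
  (forall z, fdd k L (fun=> E) z <= c%:E) ->
  forall y, fdd k (q * L) (fun=> E) y <= (c ^+ q)%:E.
Proof.
move=> mE hL y; have c0 : 0 <= c%:E := le_trans (fdd_ge0 _ _ y) (hL y).
elim: q => [|q IH]; first by rewrite mul0n expr0; exact: fdd_le1.
rewrite mulSnr exprS EFinM.
exact: le_trans (fdd_cst_addn_le _ _ _ _ mE hL y) (lee_wpmul2l c0 IH).
Qed.

(* [fdd k b (after m C) y] is the probability, from y, of being in C at all
   times j with m <= j <= b. *)
Definition after (m : nat) C : nat -> set S :=
  fun j => if (m <= j)%N then C else setT.

Lemma measurable_after m C j : measurable C -> measurable (after m C j).
Proof. by rewrite /after; case: ifP. Qed.

Lemma after0 C : after 0 C = fun=> C.
Proof. by []. Qed.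

Lemma after_sub m m' C j : (m <= m')%N -> after m C j `<=` after m' C j.
Proof.
rewrite /after => mm'; case: (leqP m' j) => [m'j|_]; last exact: subsetT.
by rewrite (leq_trans mm' m'j).
Qed.

(* Markov property at the first exit time from E, unrolled by induction on n:
   either the chain stays in E up to time n, or it leaves E before and the
   hypothesis applies from the exit point. *)
Lemma fdd_after_addn_ge {C E m} {a : R} :
  measurable C -> measurable E -> (a <= 1)%R ->
  (forall z, ~ E z -> forall b, a%:E <= fdd k b (after m C) z) ->
  forall n y b, a%:E <= fdd k b (after (n + m) C) y + fdd k n (fun=> E) y.
Proof.
move=> mC mE a1 hE n y b.
have [a0|a0] := ltP a 0%R.
  by apply: le_trans (ltW _) (adde_ge0 (fdd_ge0 _ _ _) (fdd_ge0 _ _ _)).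
have le_1Dfdd y' n' A : a%:E <= 1 + fdd k n' A y'.
  by apply: lee_paddr (fdd_ge0 _ _ _) _; rewrite lee_fin.
have mAfter p j : measurable (after p C j) by exact: measurable_after.
elim: n y b => [|n IH] y b.
  have [Ey|Ey] := pselect (E y); last by rewrite [fdd k 0 _ _]fdd_eq0 // adde0; exact: hE.
  by rewrite /= indicE mem_set // addeC; exact: le_1Dfdd.
have [Ey|Ey] := pselect (E y); last first.
  rewrite [fdd k n.+1 _ _]fdd_eq0 // adde0; apply: le_trans (hE y Ey b) _.
  by apply: le_fdd => // j; apply: after_sub; rewrite leq_addl.
have afterS0 : after (n.+1 + m) C 0 = setT by rewrite /after addSn.
case: b => [|b]; first by rewrite [fdd k 0 _ _]/= afterS0 indicT; exact: le_1Dfdd.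
have afterS : (fun j => after (n.+1 + m) C j.+1) = after (n + m) C by [].
rewrite /= afterS0 afterS indicT indicE mem_set // !mul1e -ge0_integralD //; last 4 first.
- by move=> z _; exact: fdd_ge0.
- exact: measurable_fun_fdd.
- by move=> z _; exact: fdd_ge0.
- exact: measurable_fun_fdd.
apply: (@le_trans _ _ (\int[k y]_z cst a%:E z)).
  by rewrite integral_cst // prob_kernel mule1.
apply: ge0_le_integral => //.
by apply: emeasurable_funD; exact: measurable_fun_fdd.
Qed.

Lemma fdd_after_addn_ge_sub {C D E m n} {a s : R} :
  measurable C -> measurable E -> (a <= 1)%R ->
  (forall z, ~ E z -> forall b, a%:E <= fdd k b (after m C) z) ->
  (forall z, ~ D z -> fdd k n (fun=> E) z <= s%:E) ->
  forall z, ~ D z -> forall b, (a - s)%:E <= fdd k b (after (n + m) C) z.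
Proof.
move=> mC mE a1 hE hD z Dz b.
have := fdd_after_addn_ge mC mE a1 hE n z b.
rewrite EFinB leeBlDr // => /le_trans; apply.
exact: leeD2l (hD z Dz).
Qed.

End fdd_theory.

Section path_law.
Context {d : measure_display} {S : measurableType d} {R : realType}.
Context {k : R.-pker S ~> S} {d' : measure_display} {Omega : measurableType d'}.
Context {P : probability Omega R} {xi : nat -> Omega -> S} {x : S}.
Hypothesis xi_chain : is_markov_chain_from k x P xi.
Local Open Scope ereal_scope.

Lemma measurable_path_set n (A : nat -> set S) : (forall j, measurable (A j)) ->
  measurable [set w | forall j, (j <= n)%N -> A j (xi j w)].
Proof.
move=> mA.
apply: (@bigcap_measurable _ _ (fun j => xi j @^-1` A j) [set j | (j <= n)%N]).
  by exists 0%N.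
by move=> j _; rewrite -[X in measurable X]setTI; exact: xi_chain.1.
Qed.

Lemma path_exit_setC n (A : nat -> set S) :
  [set w | exists j, (j <= n)%N /\ ~ A j (xi j w)] =
  ~` [set w | forall j, (j <= n)%N -> A j (xi j w)].
Proof.
apply/seteqP; split=> w /=; first by move=> [j [jn nA]] /(_ j jn).
by move=> /existsNP[j /not_implyP[jn nA]]; exists j.
Qed.

Lemma prob_path_exit n (A : nat -> set S) : (forall j, measurable (A j)) ->
  P [set w | exists j, (j <= n)%N /\ ~ A j (xi j w)] = 1 - fdd k n A x.
Proof.
move=> mA; rewrite path_exit_setC probability_setC; last exact: measurable_path_set.
by rewrite xi_chain.2.
Qed.

Lemma prob_visit_after_le {V N} {a : R} : measurable V ->
  (forall b, a%:E <= fdd k b (after N (~` V)) x) ->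
  P [set w | exists j, (N <= j)%N /\ V (xi j w)] <= (1 - a)%:E.
Proof.
move=> mV ha; have mA j : measurable (after N (~` V) j).
  exact/measurable_after/measurableC.
pose F b := [set w | exists j, (j <= b)%N /\ ~ after N (~` V) j (xi j w)].
have mF b : measurable (F b).
  by rewrite /F path_exit_setC; exact/measurableC/measurable_path_set.
have visitE : [set w | exists j, (N <= j)%N /\ V (xi j w)] = \bigcup_b F b.
  apply/seteqP; split=> w /=.
    move=> [j [Nj Vj]]; exists j => //; exists j.
    by rewrite /after Nj; split => //; apply.
  move=> [b _ [j [_]]]; rewrite /after; case: ifP => [Nj /contrapT Vj|_ /(_ I)] //.
  by exists j.
have ndF : nondecreasing_seq F.
  move=> b b' bb'; apply/subsetPset => w [j [jb nA]].
  by exists j; split => //; exact: leq_trans bb'.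
have cvgF := @nondecreasing_cvg_mu _ _ _ P F mF (bigcupT_measurable _ mF) ndF.
rewrite visitE -(cvg_lim _ cvgF) //; apply: lime_le; first exact: cvgP cvgF.
apply: nearW => b; rewrite /= /F prob_path_exit // EFinB.
exact: leeB.
Qed.

End path_law.

Section exit_bounds.
Context {d : measure_display} {S : measurableType d} {R : realType}.
Context {k : R.-pker S ~> S} {d' : measure_display} {Omega : measurableType d'}.
Context {P : S -> probability Omega R} {xi : nat -> Omega -> S}.
Hypothesis chain : forall x, is_markov_chain_from k x (P x) xi.
Local Open Scope ereal_scope.

Lemma stayP_fdd x n (E : set S) : measurable E ->
  stayP P xi n x E = fdd k n (fun=> E) x.
Proof. by move=> mE; exact: (chain x).2. Qed.

Lemma exitP_le1 x n (E : set S) : measurable E -> exitP P xi n x E <= 1.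
Proof.
move=> mE; rewrite /exitP (prob_path_exit (chain x) n (fun=> E)) //.
by rewrite leeBlDr ?fdd_fin_num // leeDl // fdd_ge0.
Qed.

Lemma fdd_cst_le_exitP {D E : set S} {n} {s : R} : measurable E -> (0 <= s)%R ->
  (forall x, (E `\` D) x -> (1 - s)%:E <= exitP P xi n x E) ->
  forall x, ~ D x -> fdd k n (fun=> E) x <= s%:E.
Proof.
move=> mE s0 hE x Dx; have [Ex|Ex] := pselect (E x); last by rewrite fdd_eq0 // lee_fin.
have := hE x (conj Ex Dx); rewrite /exitP (prob_path_exit (chain x) n (fun=> E)) //.
rewrite -(fineK (fdd_fin_num k n _ x (fun=> mE))) -EFinB !lee_fin.
lra.
Qed.

End exit_bounds.

Theorem proposition4p3 (R : realType) (T : ptopologicalType)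
  (hcompact : compact [set: T])
  (K : R.-pker (borel_space T) ~> (borel_space T))
  (d' : measure_display) (Omega : measurableType d')
  (P : borel_space T -> probability Omega R)
  (xi : nat -> Omega -> borel_space T)
  (hchain : forall x, is_markov_chain_from K x (P x) xi)
  (S0 S1 S2 : set (borel_space T))
  (mS0 : measurable S0) (mS1 : measurable S1) (mS2 : measurable S2)
  (h01 : S0 `<=` S1) (h12 : S1 `<=` S2)
  (r b0 : R) (hr : 0 < r) (hb0 : 0 < b0) (n0 n1 n2 q : nat)
  (A1 : forall x, S0 x -> (b0%:E <= exitP P xi n0 x S0)%E)
  (A2 : forall x, (S1 `\` S0) x -> ((1 - r / 4)%:E <= exitP P xi n1 x S1)%E)
  (A3 : forall x, (S2 `\` S1) x -> ((1 - r / 4)%:E <= exitP P xi n2 x S2)%E)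
  (A4 : forall x n, (~` S2) x -> ((1 - r / 4)%:E <= stayP P xi n x (~` S1))%E)
  (hq : (1 - b0) ^+ q < r / 4) :
  forall x : borel_space T,
    (P x [set w | exists j, (q * n0 + n1 + n2 <= j)%N /\ S1 (xi j w)] < r%:E)%E.
Proof.
(* If b0 > 1 then (A1) forces S0 = set0, and b0 may be replaced by 1. *)
wlog b0_le1 : b0 hb0 A1 hq / b0 <= 1.
  move=> main; have [b0_le1|b0_gt1] := leP b0 1; first exact: (main b0).
  apply: (main 1) => //.
    move=> x /A1 /le_trans /(_ (exitP_le1 hchain x n0 S0 mS0)).
    by rewrite lee_fin leNgt b0_gt1.
  rewrite subrr expr0n; case: eqP => [q0 | _] /=; last lra.
  by move: hq; rewrite q0 expr0.
move=> x; have mC1 := measurableC mS1; have r4_ge0 : 0 <= r / 4 by lra.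
have subr4_le1 (a : R) : a <= 1 -> a - r / 4 <= 1 by lra.
have from_outside_S2 z : ~ S2 z ->
    forall b, ((1 - r / 4)%:E <= fdd K b (after 0 (~` S1)) z)%E.
  by move=> /A4 hz b; rewrite after0 -(stayP_fdd hchain).
have stay_S2 := fdd_cst_le_exitP hchain mS2 r4_ge0 A3.
have stay_S1 := fdd_cst_le_exitP hchain mS1 r4_ge0 A2.
have stay_S0 z : (fdd K (q * n0) (fun=> S0) z <= ((1 - b0) ^+ q)%:E)%E.
  apply: fdd_cst_muln_le => // {}z; apply: (fdd_cst_le_exitP hchain (D := set0)) => //.
  - by rewrite subr_ge0.
  - by move=> y [/A1]; rewrite opprB addrC subrK.
have a1 := subr4_le1 1 (lexx 1); have a2 := subr4_le1 _ a1.
have from_outside_S1 := fdd_after_addn_ge_sub K mC1 mS2 a1 from_outside_S2 stay_S2.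
have from_outside_S0 := fdd_after_addn_ge_sub K mC1 mS1 a2 from_outside_S1 stay_S1.
have from_anywhere := fdd_after_addn_ge_sub K (D := set0) mC1 mS0
  (subr4_le1 _ a2) from_outside_S0 (fun z _ => stay_S0 z).
rewrite addn0 addnA in from_anywhere.
apply: le_lt_trans (prob_visit_after_le (hchain x) mS1 (from_anywhere x id)) _.
rewrite lte_fin; lra.
Qed.
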